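(* Let $f$ be a norm on $\mathbb{R}^n$ and let $\alpha\in\mathbb{R}^n$ be badly approximable, i.e. there is $D>0$ with $\max_{1\le j\le n}\min_{a_j\in\mathbb{Z}}|p\alpha_j-a_j|\ge Dp^{-1/n}$ for all $p\in\mathbb{N}$. Then there exists $h^*=h^*(f,\alpha)\in\mathbb{N}$ such that $$f(\xi_{\nu+h^*})<\tfrac12 f(\xi_\nu)\quad\text{for all }\nu\ge1,$$ where $(p_\nu,a_\nu)$ is the $\nu$-th $f$-best simultaneous approximation to $\alpha$ and $\xi_\nu=\alpha p_\nu-a_\nu$.
   Context: A norm $f$ here is a continuous function $\mathbb{R}^n\to\mathbb{R}_+$ with $f(x)=0\iff x=0$, $f(-x)=f(x)$, $f(tx)=tf(x)$ for $t\ge0$, and convex unit ball $B_f^1=\{y:f(y)\le1\}$ with $0$ in its interior. For $\alpha\in\mathbb{R}^n$, an $f$-best simultaneous approximation is an integer point $\tau=(p,a_1,\dots,a_n)\in\mathbb{Z}^{n+1}$ with $p\ge1$ such that $f(\alpha q-b)>f(\alpha p-a)$ for all $(q,b)\in\mathbb{Z}^{n+1}$ with $1\le q\le p-1$ and for all $(p,b)$ with $b\ne a$. They form a sequence $(p_\nu,a_\nu)$ with $p_1<p_2<\dots$. *)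

From HB Require Import structures.
From mathcomp Require Import all_boot all_order all_algebra.
From mathcomp Require Import all_classical all_reals all_analysis.
Set Implicit Arguments. Unset Strict Implicit. Unset Printing Implicit Defensive.
Import Order.TTheory GRing.Theory Num.Theory.
Import numFieldNormedType.Exports.
Local Open Scope ring_scope.

Section Defs.
Variables (R : realType) (n : nat).

Definition is_norm (f : 'rV[R]_n -> R) : Prop :=
  continuous f /\
  (forall x, 0 <= f x) /\
  (forall x, f x = 0 <-> x = 0) /\
  (forall x, f (- x) = f x) /\
  (forall (t : R) x, 0 <= t -> f (t *: x) = t * f x) /\
  (forall x y (t : R), f x <= 1 -> f y <= 1 -> 0 <= t -> t <= 1 ->
      f (t *: x + (1 - t) *: y) <= 1) /\
  (exists2 e : R, 0 < e & forall y : 'rV[R]_n, `|y| < e -> f y <= 1).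

Definition intv (a : 'rV[int]_n) : 'rV[R]_n := map_mx (fun z : int => z%:~R) a.

Definition xi (alpha : 'rV[R]_n) (p : nat) (a : 'rV[int]_n) : 'rV[R]_n :=
  p%:R *: alpha - intv a.

(* alpha badly approximable: exists D > 0 such that for every p in N (p >= 1),
   max_j min_{a_j in Z} |p alpha_j - a_j| >= D p^(-1/n); written out as:
   for every integer vector a some coordinate j has |p alpha_j - a_j| >= D p^(-1/n). *)
Definition badly_approximable (alpha : 'rV[R]_n) : Prop :=
  exists2 D : R, 0 < D & forall p : nat, (0 < p)%N ->
    forall a : 'rV[int]_n, exists j : 'I_n,
      D * (p%:R `^ (- (n%:R)^-1)) <= `|p%:R * alpha 0 j - (a 0 j)%:~R|.

Definition best_approx (f : 'rV[R]_n -> R) (alpha : 'rV[R]_n)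
    (p : nat) (a : 'rV[int]_n) : Prop :=
  [/\ (1 <= p)%N,
      (forall (q : nat) (b : 'rV[int]_n), ((1 <= q) && (q <= p.-1))%N ->
          f (xi alpha p a) < f (xi alpha q b)) &
      (forall b : 'rV[int]_n, b <> a -> f (xi alpha p a) < f (xi alpha p b))].

(* (P k, A k)_{k : nat} is the sequence of all f-best approximations, listed
   with strictly increasing denominators; index k corresponds to nu = k + 1. *)
Definition best_seq (f : 'rV[R]_n -> R) (alpha : 'rV[R]_n)
    (P : nat -> nat) (A : nat -> 'rV[int]_n) : Prop :=
  [/\ (forall k, (P k < P k.+1)%N),
      (forall k, best_approx f alpha (P k) (A k)) &
      (forall p a, best_approx f alpha p a -> exists k, P k = p /\ A k = a)].

End Defs.

From HB Require Import structures.
From mathcomp Require Import all_boot all_order all_algebra.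
From mathcomp Require Import all_classical all_reals all_analysis.
From mathcomp Require Import ring lra.
Set Implicit Arguments. Unset Strict Implicit. Unset Printing Implicit Defensive.
Import Order.TTheory GRing.Theory Num.Theory.
Import numFieldNormedType.Exports.
Local Open Scope ring_scope.

(* Every norm f is comparable with the sup norm: c |x| <= f x <= C |x|.
   Let r = f(xi_nu) and suppose f(xi_(nu+h)) >= r/2.  For i < j <= h the
   difference xi_(nu+j) - xi_(nu+i) is the error of the denominator
   p_(nu+j) - p_(nu+i) < p_(nu+h), so it is larger than f(xi_(nu+h)) >= r/2.
   The h + 1 points xi_(nu+i) thus lie in the sup-norm ball of radius r/c and
   are r/(2C)-separated; cutting that ball into M^n cubes of side r/(2C), where
   M > 4C/c, puts at most one point in each cube, whence h + 1 <= M^n.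
   So h* = M^n works. *)

Section NormComparison.
Variables (R : realType) (n : nat) (f : 'rV[R]_n -> R).
Hypothesis f_norm : is_norm f.

Lemma is_norm_ge0 x : 0 <= f x.
Proof. by case: f_norm => _ []. Qed.

Lemma is_norm_eq0 x : f x = 0 <-> x = 0.
Proof. by case: f_norm => _ [_ []]. Qed.

Lemma is_norm0 : f 0 = 0.
Proof. exact/is_norm_eq0. Qed.

Lemma is_normZ t x : 0 <= t -> f (t *: x) = t * f x.
Proof. by case: f_norm => _ [_ [_ [_ [fZ _]]]]; apply: fZ. Qed.

Lemma is_norm_le_mx_norm : exists2 C : R, 0 < C & forall x, f x <= C * `|x|.
Proof.
case: f_norm => _ [_ [_ [_ [_ [_ [e e_gt0 f_ball]]]]]].
exists (2 / e) => [|x]; first by rewrite divr_gt0.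
have [->|x_neq0] := eqVneq x 0; first by rewrite is_norm0 normr0 mulr0.
have x_gt0 : 0 < `|x| by rewrite normr_gt0.
have t_ge0 : 0 <= e / (2 * `|x|) by apply/ltW/divr_gt0; rewrite ?mulr_gt0.
have : `|(e / (2 * `|x|)) *: x| < e.
  rewrite mx_normZ ger0_norm //.
  have -> : e / (2 * `|x|) * `|x| = e / 2 by field; rewrite gt_eqF.
  by rewrite ltr_pdivrMr // ltr_pMr // ltr1n.
move=> /f_ball; rewrite is_normZ //.
have -> : e / (2 * `|x|) * f x = f x / (2 / e * `|x|) by field; rewrite !gt_eqF.
by rewrite ler_pdivrMr ?mulr_gt0 ?divr_gt0 ?invr_gt0 // mul1r.
Qed.

Lemma is_norm_ge_mx_norm : exists2 c : R, 0 < c & forall x, c * `|x| <= f x.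
Proof.
have [n0|n_gt0] := posnP n.
  exists 1 => // x.
  have -> : x = 0 by apply/rowP => -[j j_lt]; have : (j < 0)%N by rewrite -n0.
  by rewrite normr0 mulr0 is_norm0.
pose S := [set x : 'rV[R]_n | `|x| = 1]%classic.
have S_neq0 : (S !=set0)%classic.
  pose e := const_mx 1 : 'rV[R]_n.
  have e_gt0 : 0 < `|e|.
    rewrite normr_gt0; apply/eqP => /rowP /(_ (Ordinal n_gt0)) /eqP.
    by rewrite !mxE oner_eq0.
  exists (`|e|^-1 *: e).
  by rewrite /S /= mx_normZ ger0_norm ?invr_ge0 ?normr_ge0 // mulVf ?gt_eqF.
have S_compact : compact S.
  apply: bounded_closed_compact.
    exists 1; split; first by rewrite realE ler01.
    by move=> M M_gt1 y /= ->; exact: ltW.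
  apply: (@preimage_closed _ R Num.norm [set x | x = 1]%classic); last exact: closed_eq.
  by move=> x _; apply: norm_continuous.
have f_cont : continuous f by case: f_norm.
have [x0 x0_S f_min] := EVT_min_rV S_neq0 S_compact (continuous_subspaceT f_cont).
have x0_unit : `|x0| = 1 by rewrite inE in x0_S.
have c_gt0 : 0 < f x0.
  rewrite lt_def is_norm_ge0 andbT; apply/eqP => /is_norm_eq0 x00.
  by move: x0_unit; rewrite x00 normr0 => /eqP; rewrite eq_sym oner_eq0.
exists (f x0) => // x.
have [->|x_neq0] := eqVneq x 0; first by rewrite normr0 mulr0 is_norm0.
have x_gt0 : 0 < `|x| by rewrite normr_gt0.
have /f_min : (`|x|^-1 *: x) \in S.
  by rewrite inE /S /= mx_normZ ger0_norm ?invr_ge0 ?normr_ge0 // mulVf ?gt_eqF.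
by rewrite is_normZ ?invr_ge0 ?normr_ge0 // mulrC -ler_pdivlMr.
Qed.

End NormComparison.

Lemma mx_norm_ge_entry (K : realDomainType) m n (x : 'M[K]_(m, n)) i j :
  `|x i j| <= `|x|.
Proof.
have -> : `|x| = mx_norm x by [].
by rewrite mx_normrE (le_bigmax _ (fun ij => `|x ij.1 ij.2|) (i, j)).
Qed.

Lemma mx_norm_lt (K : realDomainType) m n (x : 'M[K]_(m, n)) d :
  0 < d -> (forall i j, `|x i j| < d) -> `|x| < d.
Proof.
have -> : `|x| = mx_norm x by [].
by move=> d_gt0 x_lt; rewrite mx_normrE; apply/bigmax_ltP; split => // ij _.
Qed.

Lemma packing_card_le (R : archiRealFieldType) n N M (y : 'I_N -> 'rV[R]_n)
    (B d : R) :
  0 < d -> (forall i, `|y i| <= B) -> 2 * B < d * M%:R ->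
  (forall i i', i != i' -> d <= `|y i - y i'|) -> (N <= M ^ n)%N.
Proof.
move=> d_gt0 y_le radius_lt y_sep.
have y_entry i j : - B <= y i 0 j <= B.
  by rewrite -ler_norml (le_trans (mx_norm_ge_entry _ _ _) (y_le i)).
pose u i j := (y i 0 j + B) / d.
have u_ge0 i j : 0 <= u i j.
  by have /andP[? _] := y_entry i j; rewrite divr_ge0 ?(ltW d_gt0) //; lra.
have u_lt i j : (Num.truncn (u i j) < M)%N.
  have /andP[_ ?] := y_entry i j.
  by rewrite truncn_lt_nat // ltr_pdivrMr //; lra.
pose cell i : {ffun 'I_n -> 'I_M} := [ffun j => Ordinal (u_lt i j)].
suff /leq_card : injective cell by rewrite card_ffun !card_ord.
move=> i i' /ffunP same_cell; apply/eqP/negP => /negP/y_sep; apply/negP.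
rewrite -ltNge; apply: mx_norm_lt => // k j; rewrite (ord1 k).
have := same_cell j; rewrite !ffunE => /(congr1 val) /= same_trunc.
have := truncn_itv (u_ge0 i j); have := truncn_itv (u_ge0 i' j).
rewrite same_trunc -!natr1 => /andP[? ?] /andP[? ?].
have -> : (y i - y i') 0 j = d * (u i j - u i' j).
  by rewrite !mxE /u; field; rewrite gt_eqF.
rewrite normrM gtr0_norm // -[ltRHS]mulr1 ltr_pM2l // ltr_norml.
apply/andP; split; lra.
Qed.

Lemma xiB (R : realType) n (alpha : 'rV[R]_n) p p' a a' : (p' <= p)%N ->
  xi alpha p a - xi alpha p' a' = xi alpha (p - p') (a - a').
Proof.
move=> le_p'p; rewrite /xi natrB // scalerBl /intv.
by apply/rowP => j; rewrite !mxE rmorphB /=; ring.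
Qed.

Section BestSeq.
Variables (R : realType) (n : nat) (f : 'rV[R]_n -> R) (alpha : 'rV[R]_n).
Variables (P : nat -> nat) (A : nat -> 'rV[int]_n).
Hypothesis best : best_seq f alpha P A.

Lemma best_seq_denom_gt0 k : (0 < P k)%N.
Proof. by case: best => _ best_k _; case: (best_k k). Qed.

Lemma best_seq_denom_increasing : {homo P : i j / (i < j)%N}.
Proof. by case: best => P_incr _ _; apply: homo_ltn => //; apply: ltn_trans. Qed.

Lemma best_seq_minimal k q b : (0 < q < P k)%N ->
  f (xi alpha (P k) (A k)) < f (xi alpha q b).
Proof.
move=> /andP[q_gt0 q_lt]; case: best => _ best_k _; case: (best_k k) => _ + _.
by apply; rewrite q_gt0 -ltnS prednK ?best_seq_denom_gt0.
Qed.

Lemma best_seq_error_decreasing :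
  {homo (fun k => f (xi alpha (P k) (A k))) : i j / (i < j)%N >-> j < i}.
Proof.
apply: homo_ltn => [y x z|k]; first by move=> /[swap]; apply: lt_trans.
by apply: best_seq_minimal; rewrite best_seq_denom_gt0 best_seq_denom_increasing.
Qed.

Lemma best_seq_error_nonincreasing :
  {homo (fun k => f (xi alpha (P k) (A k))) : i j / (i <= j)%N >-> j <= i}.
Proof.
move=> i j; rewrite leq_eqVlt => /predU1P[-> //|lt_ij].
exact/ltW/best_seq_error_decreasing.
Qed.

Lemma best_seq_errorB_gt i j k : (i < j <= k)%N ->
  f (xi alpha (P k) (A k)) < f (xi alpha (P j) (A j) - xi alpha (P i) (A i)).
Proof.
move=> /andP[lt_ij le_jk]; have lt_Pij := best_seq_denom_increasing lt_ij.
rewrite xiB; last exact: ltnW.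
apply: best_seq_minimal; rewrite subn_gt0 lt_Pij /=.
apply: (leq_trans _ (ltnW_homo best_seq_denom_increasing le_jk)).
by rewrite ltn_subrL !best_seq_denom_gt0.
Qed.

Lemma best_seq_error_halves (C c : R) (M : nat) :
  0 < C -> 0 < c -> (forall x, f x <= C * `|x|) -> (forall x, c * `|x| <= f x) ->
  4 * C / c < M%:R -> forall nu,
  f (xi alpha (P (nu + M ^ n)) (A (nu + M ^ n))) < f (xi alpha (P nu) (A nu)) / 2.
Proof.
move=> C_gt0 c_gt0 f_le f_ge M_gt nu.
set h := (M ^ n)%N; set r := f (xi alpha (P nu) (A nu)).
have f_ge0 x : 0 <= f x := le_trans (mulr_ge0 (ltW c_gt0) (normr_ge0 x)) (f_ge x).
have r_gt0 : 0 < r := le_lt_trans (f_ge0 _) (best_seq_error_decreasing (ltnSn nu)).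
rewrite ltNge; apply/negP => half_le.
pose y (i : 'I_h.+1) := xi alpha (P (nu + i)) (A (nu + i)).
have y_le i : `|y i| <= r / c.
  rewrite ler_pdivlMr // mulrC; apply: le_trans (f_ge _) _.
  by apply: best_seq_error_nonincreasing; rewrite leq_addr.
have y_sep i i' : i != i' -> r / (2 * C) <= `|y i - y i'|.
  wlog lt_i'i : i i' / (i' < i)%N => [gen neq_ii'|_].
    case: (ltngtP i i') => [lt_ii'|lt_i'i|/val_inj eq_ii'].
    - by rewrite distrC; apply: gen; rewrite // eq_sym.
    - exact: gen.
    - by rewrite eq_ii' eqxx in neq_ii'.
  have : f (xi alpha (P (nu + h)) (A (nu + h))) < f (y i - y i').
    rewrite /y; apply: best_seq_errorB_gt.
    by rewrite ltn_add2l lt_i'i leq_add2l -ltnS ltn_ord.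
  move=> /lt_le_trans /(_ (f_le _)) half_lt.
  rewrite ler_pdivrMr ?mulr_gt0 // [_ * (2 * C)]mulrCA [_ * C]mulrC; lra.
have sep_gt0 : 0 < r / (2 * C) by rewrite divr_gt0 ?mulr_gt0.
have radius_lt : 2 * (r / c) < r / (2 * C) * M%:R.
  have -> : 2 * (r / c) = r / (2 * C) * (4 * C / c) by field; rewrite !gt_eqF.
  by rewrite ltr_pM2l.
by have := packing_card_le sep_gt0 y_le radius_lt y_sep; rewrite ltnn.
Qed.

End BestSeq.

Theorem corollary2 (R : realType) (n : nat) (f : 'rV[R]_n -> R) (alpha : 'rV[R]_n) :
  (0 < n)%N -> is_norm f -> badly_approximable alpha ->
  exists hstar : nat,
    forall (P : nat -> nat) (A : nat -> 'rV[int]_n), best_seq f alpha P A ->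
    forall nu : nat,
      f (xi alpha (P (nu + hstar)%N) (A (nu + hstar)%N)) < f (xi alpha (P nu) (A nu)) / 2.
Proof.
move=> _ f_norm _.
have [C C_gt0 f_le] := is_norm_le_mx_norm f_norm.
have [c c_gt0 f_ge] := is_norm_ge_mx_norm f_norm.
pose M := (Num.truncn (4 * C / c)).+1.
exists (M ^ n)%N => P A best.
by apply: (best_seq_error_halves best C_gt0 c_gt0 f_le f_ge); apply: truncnS_gt.
Qed.
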